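(* Let $(X_i,x_i,d_i)_{i\in\mathbb{Z}^+}$ be pointed metric spaces. For each $i$, let $R_i\colon X_i\times I\to X_i$ be a strong deformation contraction of $X_i$ to $x_i$. Define $R\colon(\bigvee^m_i X_i)\times I\to\bigvee^m_i X_i$ by $R(x,t)=R_i(x,t)$ for $x\in X_i$. Then $R$ is well defined and is a (continuous) strong deformation contraction of the metric wedge $\bigvee^m_i X_i$ to its wedge point.
   Context: Let $I=[0,1]$. A strong deformation contraction of a pointed metric space $(X,x_0,d)$ to $x_0$ is a continuous map $H\colon X\times I\to X$ such that: (1) $H(x,0)=x$ for all $x$; (2) $H(X\times\{1\})=H(\{x_0\}\times I)=\{x_0\}$; (3) $d(H(x,t),H(y,t))\le d(x,y)$ for all $x,y\in X$ and all $t\in I$. The metric wedge $\bigvee^m_i X_i$ of pointed metric spaces $(X_i,x_i,d_i)$ is the disjoint union of the $X_i$ with all the points $x_i$ identified to a single wedge point. It carries the metric $d_\vee$ given by: - $d_\vee(x,y)=d_j(x,y)$ if $x,y\in X_j$ for some $j$; - $d_\vee(x,y)=d_j(x,x_j)+d_k(y,x_k)$ if $x\in X_j$, $y\in X_k$ with $j\ne k$. *)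

From Stdlib Require Import Reals Lra Classical ClassicalEpsilon Arith.
Open Scope R_scope.

Record PMetric := {
  pm_car :> Type;
  pm_d : pm_car -> pm_car -> R;
  pm_pt : pm_car;
  pm_d_eq0 : forall x y, pm_d x y = 0 <-> x = y;
  pm_d_sym : forall x y, pm_d x y = pm_d y x;
  pm_d_tri : forall x y z, pm_d x z <= pm_d x y + pm_d y z
}.

(** H : T -> R -> T is
    considered only on T x [0,1]; continuity is w.r.t. the product of the
    metric topology on T and the usual topology on I = [0,1]. *)
Definition inI (t : R) : Prop := 0 <= t <= 1.

Definition strong_deformation_contraction {T : Type} (d : T -> T -> R) (x0 : T)
  (H : T -> R -> T) : Prop :=
  (forall x t, inI t -> forall eps, 0 < eps -> exists delta, 0 < delta /\
      forall y s, inI s -> d x y < delta -> Rabs (t - s) < delta ->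
        d (H x t) (H y s) < eps) /\
  (forall x, H x 0 = x) /\
  (forall x, H x 1 = x0) /\ (forall t, inI t -> H x0 t = x0) /\
  (forall x y t, inI t -> d (H x t) (H y t) <= d x y).

(** The wedge of the family X (indexed by nat, standing for Z^+):
    the wedge point, or a point of some X i distinct from its base point. *)
Inductive wedge (X : nat -> PMetric) : Type :=
| wpt : wedge X
| wpiece (i : nat) (x : X i) (hx : x <> pm_pt (X i)) : wedge X.

Arguments wpt {X}.
Arguments wpiece {X} i x hx.

Definition winj {X : nat -> PMetric} (i : nat) (x : X i) : wedge X :=
  match excluded_middle_informative (x = pm_pt (X i)) with
  | left _ => wpt
  | right h => wpiece i x h
  end.

Definition wbase {X : nat -> PMetric} (w : wedge X) : R :=
  match w with
  | wpt => 0
  | wpiece i x _ => pm_d (X i) x (pm_pt (X i))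
  end.

Definition wedge_dist {X : nat -> PMetric} (w v : wedge X) : R :=
  match w, v with
  | wpt, _ => wbase v
  | _, wpt => wbase w
  | wpiece i x _, wpiece j y _ =>
      match Nat.eq_dec j i with
      | left e => pm_d (X i) x (eq_rect j (fun k => pm_car (X k)) y i e)
      | right _ => pm_d (X i) x (pm_pt (X i)) + pm_d (X j) y (pm_pt (X j))
      end
  end.

Definition wedge_R {X : nat -> PMetric} (Rf : forall i, X i -> R -> X i)
  (w : wedge X) (t : R) : wedge X :=
  match w with
  | wpt => wpt
  | wpiece i x _ => winj i (Rf i x t)
  end.

(* Every point of the wedge lies in the image of some X_i, and R acts there as
   R_i; since each R_i fixes the base point, this is consistent at the wedge
   point.  Nonexpansiveness within one piece is that of R_i, and across two
   pieces it follows from d(R_i(x,t), x_i) <= d(x, x_i).  Continuity at the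
   wedge point follows from nonexpansiveness, and at a point x of X_i other
   than x_i from that of R_i: the ball of radius d(x, x_i) around x lies in
   X_i. *)
From Stdlib Require Import Reals Lra Eqdep_dec ProofIrrelevance Classical ClassicalEpsilon.
Open Scope R_scope.

Section PointedMetric.
Variable M : PMetric.

Lemma pm_d_refl (x : M) : pm_d M x x = 0.
Proof. apply pm_d_eq0; reflexivity. Qed.

Lemma pm_d_nonneg (x y : M) : 0 <= pm_d M x y.
Proof.
  pose proof (pm_d_tri M x y x) as tri.
  rewrite (pm_d_sym M y x), pm_d_refl in tri. lra.
Qed.

Lemma pm_d_pos (x y : M) : x <> y -> 0 < pm_d M x y.
Proof.
  intro xy. destruct (Rle_lt_or_eq_dec _ _ (pm_d_nonneg x y)) as [pos | zero]; [exact pos |].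
  exfalso. apply xy, pm_d_eq0. now symmetry.
Qed.

End PointedMetric.

Section Wedge.
Variable X : nat -> PMetric.

Lemma winj_pt (i : nat) : @winj X i (pm_pt (X i)) = wpt.
Proof. unfold winj. destruct excluded_middle_informative; congruence. Qed.

Lemma winj_piece (i : nat) (x : X i) (hx : x <> pm_pt (X i)) : winj i x = wpiece i x hx.
Proof.
  unfold winj. destruct excluded_middle_informative as [e | n]; [congruence |].
  f_equal. apply proof_irrelevance.
Qed.

Lemma winj_surj (w : wedge X) : exists i (x : X i), w = winj i x.
Proof.
  destruct w as [| i x hx].
  - exists 0%nat, (pm_pt (X 0)). now rewrite winj_pt.
  - exists i, x. now rewrite (winj_piece i x hx).
Qed.

Lemma wbase_winj (i : nat) (x : X i) : wbase (winj i x) = pm_d (X i) x (pm_pt (X i)).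
Proof.
  destruct (classic (x = pm_pt (X i))) as [-> | n].
  - now rewrite winj_pt, pm_d_refl.
  - now rewrite (winj_piece i x n).
Qed.

Lemma wedge_dist_wpt_r (w : wedge X) : wedge_dist w wpt = wbase w.
Proof. now destruct w. Qed.

Lemma wedge_dist_winj_same (i : nat) (x y : X i) :
  wedge_dist (winj i x) (winj i y) = pm_d (X i) x y.
Proof.
  destruct (classic (x = pm_pt (X i))) as [-> | nx].
  - rewrite winj_pt. simpl. now rewrite wbase_winj, pm_d_sym.
  - destruct (classic (y = pm_pt (X i))) as [-> | ny].
    + now rewrite winj_pt, wedge_dist_wpt_r, wbase_winj.
    + rewrite (winj_piece i x nx), (winj_piece i y ny). simpl.
      destruct (Nat.eq_dec i i) as [e | n]; [| congruence].
      now rewrite (UIP_refl_nat _ e).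
Qed.

Lemma wedge_dist_winj_diff (i j : nat) (x : X i) (y : X j) : i <> j ->
  wedge_dist (winj i x) (winj j y) = pm_d (X i) x (pm_pt (X i)) + pm_d (X j) y (pm_pt (X j)).
Proof.
  intro ij.
  destruct (classic (x = pm_pt (X i))) as [-> | nx].
  - rewrite winj_pt, pm_d_refl. simpl. rewrite wbase_winj. lra.
  - destruct (classic (y = pm_pt (X j))) as [-> | ny].
    + rewrite winj_pt, wedge_dist_wpt_r, wbase_winj, pm_d_refl. lra.
    + rewrite (winj_piece i x nx), (winj_piece j y ny). simpl.
      destruct (Nat.eq_dec j i) as [e | _]; [congruence | reflexivity].
Qed.

Lemma wedge_dist_lt_wbase_same_piece (i : nat) (x : X i) (w : wedge X) :
  wedge_dist (winj i x) w < pm_d (X i) x (pm_pt (X i)) -> exists y : X i, w = winj i y.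
Proof.
  destruct (winj_surj w) as (j & y & ->). intro close.
  destruct (Nat.eq_dec i j) as [<- | ij]; [now exists y |].
  rewrite wedge_dist_winj_diff in close by exact ij.
  pose proof (pm_d_nonneg _ y (pm_pt (X j))). lra.
Qed.

Section Contraction.
Variable Rf : forall i, X i -> R -> X i.
Hypothesis HR : forall i, strong_deformation_contraction (pm_d (X i)) (pm_pt (X i)) (Rf i).

Lemma Rf_pt (i : nat) (t : R) : inI t -> Rf i (pm_pt (X i)) t = pm_pt (X i).
Proof. destruct (HR i) as (_ & _ & _ & fix_pt & _). auto. Qed.

Lemma Rf_nonexpansive (i : nat) (x y : X i) (t : R) :
  inI t -> pm_d (X i) (Rf i x t) (Rf i y t) <= pm_d (X i) x y.
Proof. destruct (HR i) as (_ & _ & _ & _ & lip). auto. Qed.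

Lemma Rf_dist_pt_le (i : nat) (x : X i) (t : R) : inI t ->
  pm_d (X i) (Rf i x t) (pm_pt (X i)) <= pm_d (X i) x (pm_pt (X i)).
Proof.
  intro ht. rewrite <- (Rf_pt i t ht) at 1. now apply Rf_nonexpansive.
Qed.

Lemma wedge_R_winj (i : nat) (x : X i) (t : R) :
  inI t -> wedge_R Rf (winj i x) t = winj i (Rf i x t).
Proof.
  intro ht. destruct (classic (x = pm_pt (X i))) as [-> | n].
  - now rewrite winj_pt, Rf_pt, winj_pt.
  - now rewrite (winj_piece i x n).
Qed.

Lemma wedge_R_nonexpansive (w v : wedge X) (t : R) :
  inI t -> wedge_dist (wedge_R Rf w t) (wedge_R Rf v t) <= wedge_dist w v.
Proof.
  intro ht.
  destruct (winj_surj w) as (i & x & ->), (winj_surj v) as (j & y & ->).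
  rewrite !wedge_R_winj by exact ht.
  destruct (Nat.eq_dec i j) as [<- | ij].
  - rewrite !wedge_dist_winj_same. now apply Rf_nonexpansive.
  - rewrite !wedge_dist_winj_diff by exact ij.
    pose proof (Rf_dist_pt_le i x t ht). pose proof (Rf_dist_pt_le j y t ht). lra.
Qed.

Lemma wedge_R_continuous (w : wedge X) (t : R) : inI t -> forall eps, 0 < eps ->
  exists delta, 0 < delta /\ forall v s, inI s -> wedge_dist w v < delta ->
    Rabs (t - s) < delta -> wedge_dist (wedge_R Rf w t) (wedge_R Rf v s) < eps.
Proof.
  intros ht eps heps.
  destruct w as [| i x hx].
  - exists eps. split; [exact heps |]. intros v s hs close _.
    change (wedge_R Rf wpt t) with (wedge_R Rf (@wpt X) s).
    pose proof (wedge_R_nonexpansive wpt v s hs). lra.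
  - destruct (HR i) as (cont & _).
    destruct (cont x t ht eps heps) as (delta & hdelta & near).
    pose proof (pm_d_pos _ _ _ hx) as hr.
    exists (Rmin delta (pm_d (X i) x (pm_pt (X i)))).
    split; [now apply Rmin_glb_lt |].
    intros v s hs close hts.
    pose proof (Rmin_l delta (pm_d (X i) x (pm_pt (X i)))).
    pose proof (Rmin_r delta (pm_d (X i) x (pm_pt (X i)))).
    rewrite <- (winj_piece i x hx) in *.
    destruct (wedge_dist_lt_wbase_same_piece i x v) as (y & ->); [lra |].
    rewrite !wedge_R_winj, wedge_dist_winj_same by assumption.
    rewrite wedge_dist_winj_same in close.
    apply near; auto; lra.
Qed.

Lemma wedge_R_0 (w : wedge X) : wedge_R Rf w 0 = w.
Proof.
  destruct w as [| i x hx]; [reflexivity |]. simpl.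
  destruct (HR i) as (_ & start & _). rewrite start. apply winj_piece.
Qed.

Lemma wedge_R_1 (w : wedge X) : wedge_R Rf w 1 = wpt.
Proof.
  destruct w as [| i x hx]; [reflexivity |]. simpl.
  destruct (HR i) as (_ & _ & finish & _). rewrite finish. apply winj_pt.
Qed.

End Contraction.
End Wedge.

Theorem mainTheorem6 (X : nat -> PMetric) (Rf : forall i, X i -> R -> X i)
  (HR : forall i, strong_deformation_contraction (pm_d (X i)) (pm_pt (X i)) (Rf i)) :
  (* well-definedness: R agrees with R_i on (the image of) every X_i,
     including at the identified base point *)
  (forall i (x : X i) t, inI t -> wedge_R Rf (winj i x) t = winj i (Rf i x t)) /\
  strong_deformation_contraction (@wedge_dist X) (@wpt X) (wedge_R Rf).
Proof.
  split; [exact (wedge_R_winj X Rf HR) |].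
  repeat split.
  - exact (wedge_R_continuous X Rf HR).
  - exact (wedge_R_0 X Rf HR).
  - exact (wedge_R_1 X Rf HR).
  - exact (wedge_R_nonexpansive X Rf HR).
Qed.
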